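(* Let $k>0$ and consider the system of ODEs, for $r>0$, $\theta$, $z$, $p_R$, $p_S$ real, \[ \dot r = p_R,\quad \dot\theta = \frac{p_S}{r^2},\quad \dot z = \frac{p_S}{2},\quad \dot p_R = \frac{p_S^2}{r^3} - \frac{2kr^3}{(r^4+16z^2)^{3/2}},\quad \dot p_S = -\frac{8kr^2 z}{(r^4+16z^2)^{3/2}}. \] Then the following functions, quadratic in the momenta, are first integrals of the system: \begin{align*} F_1 &= \Big(p_Rp_Sr-2p_R^2z+\frac{2p_S^2z}{r^2}\Big)\cos(2\theta) + \Big(\frac{4p_Rp_Sz}{r}-p_S^2+\frac{kr^2}{\sqrt{r^4+16z^2}}\Big)\sin(2\theta),\\ F_2 &= -\Big(p_Rp_Sr-2p_R^2z+\frac{2p_S^2z}{r^2}\Big)\sin(2\theta) + \Big(\frac{4p_Rp_Sz}{r}-p_S^2+\frac{kr^2}{\sqrt{r^4+16z^2}}\Big)\cos(2\theta),\\ F_3 &= (2zp_R-rp_S)^2 + 4z^2\Big(\frac{p_S^2}{r^2}+\frac{2k}{\sqrt{r^4+16z^2}}\Big). \end{align*} Moreover, with $H = \frac12\big(p_R^2+\frac{p_S^2}{r^2}\big) - \frac{k}{\sqrt{r^4+16z^2}}$, any three of $H,F_1,F_2,F_3$ are functionally independent almost everywhere, and they satisfy the relation $F_1^2+F_2^2 = 2HF_3 + k^2$.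
   Context: A first integral is a function of $(r,\theta,z,p_R,p_S)$ constant along all solutions. The system describes nonholonomic motion on the Heisenberg group in the potential $-k/\sqrt{r^4+16z^2}$ in cylindrical coordinates, with Hamiltonian $H$. *)

From Stdlib Require Import Reals.
From Coquelicot Require Import Coquelicot.
Open Scope R_scope.

(* A function of the phase-space point (r, theta, z, pR, pS). *)
Definition phasefun := R -> R -> R -> R -> R -> R.

Definition rho (r z : R) : R := r ^ 4 + 16 * z ^ 2.

Definition Ham (k : R) : phasefun := fun r th z pR pS =>
  / 2 * (pR ^ 2 + pS ^ 2 / r ^ 2) - k / sqrt (rho r z).

Definition A_coef (r z pR pS : R) : R :=
  pR * pS * r - 2 * pR ^ 2 * z + 2 * pS ^ 2 * z / r ^ 2.
Definition B_coef (k r z pR pS : R) : R :=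
  4 * pR * pS * z / r - pS ^ 2 + k * r ^ 2 / sqrt (rho r z).

Definition F1 (k : R) : phasefun := fun r th z pR pS =>
  A_coef r z pR pS * cos (2 * th) + B_coef k r z pR pS * sin (2 * th).
Definition F2 (k : R) : phasefun := fun r th z pR pS =>
  - A_coef r z pR pS * sin (2 * th) + B_coef k r z pR pS * cos (2 * th).
Definition F3 (k : R) : phasefun := fun r th z pR pS =>
  (2 * z * pR - r * pS) ^ 2
  + 4 * z ^ 2 * (pS ^ 2 / r ^ 2 + 2 * k / sqrt (rho r z)).

Definition is_solution (k a b : R) (r th z pR pS : R -> R) : Prop :=
  forall t, a < t < b ->
    0 < r t /\
    is_derive r t (pR t) /\
    is_derive th t (pS t / (r t) ^ 2) /\
    is_derive z t (pS t / 2) /\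
    is_derive pR t ((pS t) ^ 2 / (r t) ^ 3
                     - 2 * k * (r t) ^ 3 / Rpower (rho (r t) (z t)) (3 / 2)) /\
    is_derive pS t (- (8 * k * (r t) ^ 2 * z t) / Rpower (rho (r t) (z t)) (3 / 2)).

Definition first_integral (k : R) (F : phasefun) : Prop :=
  forall (a b : R) (r th z pR pS : R -> R),
    is_solution k a b r th z pR pS ->
    forall t1 t2, a < t1 < b -> a < t2 < b ->
      F (r t1) (th t1) (z t1) (pR t1) (pS t1) = F (r t2) (th t2) (z t2) (pR t2) (pS t2).

Definition d_r (f : phasefun) r th z pR pS := Derive (fun x => f x th z pR pS) r.
Definition d_th (f : phasefun) r th z pR pS := Derive (fun x => f r x z pR pS) th.
Definition d_z (f : phasefun) r th z pR pS := Derive (fun x => f r th x pR pS) z.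
Definition d_pR (f : phasefun) r th z pR pS := Derive (fun x => f r th z x pS) pR.
Definition d_pS (f : phasefun) r th z pR pS := Derive (fun x => f r th z pR x) pS.

Definition indep_at (f g h : phasefun) (r th z pR pS : R) : Prop :=
  forall a b c : R,
    a * d_r f r th z pR pS + b * d_r g r th z pR pS + c * d_r h r th z pR pS = 0 ->
    a * d_th f r th z pR pS + b * d_th g r th z pR pS + c * d_th h r th z pR pS = 0 ->
    a * d_z f r th z pR pS + b * d_z g r th z pR pS + c * d_z h r th z pR pS = 0 ->
    a * d_pR f r th z pR pS + b * d_pR g r th z pR pS + c * d_pR h r th z pR pS = 0 ->
    a * d_pS f r th z pR pS + b * d_pS g r th z pR pS + c * d_pS h r th z pR pS = 0 ->
    a = 0 /\ b = 0 /\ c = 0.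

(* Lebesgue-null subsets of R^5: coverable by countably many closed boxes
   of arbitrarily small total volume. *)
Definition null5 (S : R -> R -> R -> R -> R -> Prop) : Prop :=
  forall eps : R, 0 < eps ->
  exists lo hi : nat -> nat -> R,
    (forall n j, lo n j <= hi n j) /\
    (forall x0 x1 x2 x3 x4, S x0 x1 x2 x3 x4 ->
       exists n, lo n 0%nat <= x0 <= hi n 0%nat /\ lo n 1%nat <= x1 <= hi n 1%nat /\
                 lo n 2%nat <= x2 <= hi n 2%nat /\ lo n 3%nat <= x3 <= hi n 3%nat /\
                 lo n 4%nat <= x4 <= hi n 4%nat) /\
    (forall N, sum_f_R0 (fun n => (hi n 0%nat - lo n 0%nat) * (hi n 1%nat - lo n 1%nat)
                               * (hi n 2%nat - lo n 2%nat) * (hi n 3%nat - lo n 3%nat)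
                               * (hi n 4%nat - lo n 4%nat)) N <= eps).

Definition indep_ae (f g h : phasefun) : Prop :=
  null5 (fun r th z pR pS => 0 < r /\ ~ indep_at f g h r th z pR pS).

(* Each [Fi] is a first integral because its derivative along the flow, computed by the chain
   rule, is a rational function of [r, z, pR, pS, sin 2th, cos 2th] and [S = sqrt (r^4 + 16 z^2)]
   that vanishes once [S^2] is replaced by [r^4 + 16 z^2].  Writing [F1 = A cos 2th + B sin 2th]
   and [F2 = - A sin 2th + B cos 2th] gives [F1^2 + F2^2 = A^2 + B^2], and the relation is algebra.

   For independence, the Jacobian minor in the columns [th, pR, pS] of each triple is an explicit
   product: [-4 r A F2], [4 r A F1], [-4 r H A] and [4 r A F3].  So for [r > 0] independence can
   fail only where [pR = 0], where [A = 0] (then [z] is a function of the other coordinates), or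
   where the last factor vanishes: [pR = +- sqrt (...)] when [H = 0],
   [th = c + atan (B / A) / 2 + m PI / 2] when [F1 = 0] or [F2 = 0], and [z = 0] since [F3 > 0]
   otherwise.  Each of these sets lies in countably many graphs of functions that are bounded and
   Lipschitz on compact pieces of R^4, and such graphs are null. *)

From Stdlib Require Import Reals Lra Lia Arith ZArith IndefiniteDescription Classical.
From Coquelicot Require Import Coquelicot.
Open Scope R_scope.

Lemma rho_pos (r z : R) : 0 < r -> 0 < rho r z.
Proof. intros Hr. unfold rho. generalize (pow_lt r 4 Hr) (pow2_ge_0 z). lra. Qed.

Lemma Rpower_3_2 (x : R) : 0 < x -> Rpower x (3 / 2) = x * sqrt x.
Proof.
  intros Hx. replace (3 / 2) with (1 + / 2) by field.
  now rewrite Rpower_plus, Rpower_1, Rpower_sqrt.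
Qed.

(** * First integrals and the quadratic relation *)

Section AlongSolution.
Context {k a b : R} {r th z pR pS : R -> R} {t : R}.
Hypothesis Hsol : is_solution k a b r th z pR pS.
Hypothesis Ht : a < t < b.

Lemma solution_pos : 0 < r t.
Proof. apply Hsol, Ht. Qed.

Lemma solution_rho_pos : 0 < rho (r t) (z t).
Proof. apply rho_pos, solution_pos. Qed.

(* Stated for the eta-expanded functions, which is the form [auto_derive] produces. *)
Lemma solution_derive :
  Derive (fun s => r s) t = pR t /\ Derive (fun s => th s) t = pS t / r t ^ 2 /\
  Derive (fun s => z s) t = pS t / 2 /\
  Derive (fun s => pR s) t =
    pS t ^ 2 / r t ^ 3 - 2 * k * r t ^ 3 / (rho (r t) (z t) * sqrt (rho (r t) (z t))) /\
  Derive (fun s => pS s) t =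
    - (8 * k * r t ^ 2 * z t) / (rho (r t) (z t) * sqrt (rho (r t) (z t))).
Proof.
  destruct (Hsol t Ht) as (_ & Dr & Dth & Dz & DpR & DpS).
  rewrite Rpower_3_2 in DpR, DpS by exact solution_rho_pos.
  repeat split; now apply is_derive_unique.
Qed.

Lemma solution_ex_derive :
  ex_derive r t /\ ex_derive th t /\ ex_derive z t /\ ex_derive pR t /\ ex_derive pS t.
Proof.
  destruct (Hsol t Ht) as (_ & Dr & Dth & Dz & DpR & DpS).
  repeat split; eexists; eassumption.
Qed.
End AlongSolution.

Lemma const_of_derive_0 (phi : R -> R) (a b : R) :
  (forall t, a < t < b -> is_derive phi t 0) ->
  forall t1 t2, a < t1 < b -> a < t2 < b -> phi t1 = phi t2.
Proof.
  intros Hphi t1 t2 H1 H2.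
  assert (Hmin : a < Rmin t1 t2) by (apply Rmin_glb_lt; lra).
  assert (Hmax : Rmax t1 t2 < b) by (apply Rmax_lub_lt; lra).
  destruct (MVT_gen phi t1 t2 (fun _ => 0)) as [c [_ Hc]]; [| | lra].
  - intros t Ht. apply Hphi. lra.
  - intros t Ht. apply continuity_pt_filterlim.
    refine (ex_derive_continuous phi t _). exists 0. apply Hphi. lra.
Qed.

Lemma first_integral_of_derive_0 (k : R) (F : phasefun) :
  (forall a b r th z pR pS t, is_solution k a b r th z pR pS -> a < t < b ->
     is_derive (fun t => F (r t) (th t) (z t) (pR t) (pS t)) t 0) ->
  first_integral k F.
Proof.
  intros HF a b r th z pR pS Hsol.
  apply const_of_derive_0. intros t Ht. now apply (HF a b).
Qed.

(* In the numerators that occur here, [S] appears only through [S ^ 2]. *)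
Ltac field_mod_sqrt HS :=
  field_simplify;
  [ match goal with |- ?N / _ = 0 => replace N with 0 by (rewrite HS; ring) end;
    unfold Rdiv; ring | ..].

Ltac orbital_derivative_0 Hsol Ht :=
  let Hr := fresh "Hr" in let Hrho := fresh "Hrho" in
  let HS := fresh "HS" in let HS0 := fresh "HS0" in
  let Dr := fresh "Dr" in let Dth := fresh "Dth" in let Dz := fresh "Dz" in
  let DR := fresh "DR" in let DS := fresh "DS" in
  pose proof (solution_pos Hsol Ht) as Hr;
  pose proof (solution_rho_pos Hsol Ht) as Hrho;
  pose proof (solution_ex_derive Hsol Ht);
  destruct (solution_derive Hsol Ht) as (Dr & Dth & Dz & DR & DS);
  (* [auto_derive] writes powers as iterated products; bring everything to that form. *)
  unfold rho in *; simpl pow in *;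
  auto_derive;
  [ repeat split; try tauto; apply Rgt_not_eq; first [apply sqrt_lt_R0; lra | nra]
  | rewrite ?Dr, ?Dth, ?Dz, ?DR, ?DS;
    match goal with |- context [sqrt ?X] =>
      pose proof (pow2_sqrt X (Rlt_le _ _ Hrho)) as HS;
      pose proof (sqrt_lt_R0 X Hrho) as HS0;
      set (S := sqrt X) in * end;
    field_mod_sqrt HS; repeat split; apply Rgt_not_eq; nra ].

Lemma F1_first_integral (k : R) : first_integral k (F1 k).
Proof.
  apply first_integral_of_derive_0; intros a b r th z pR pS t Hsol Ht.
  unfold F1, A_coef, B_coef. orbital_derivative_0 Hsol Ht.
Qed.

Lemma F2_first_integral (k : R) : first_integral k (F2 k).
Proof.
  apply first_integral_of_derive_0; intros a b r th z pR pS t Hsol Ht.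
  unfold F2, A_coef, B_coef. orbital_derivative_0 Hsol Ht.
Qed.

Lemma F3_first_integral (k : R) : first_integral k (F3 k).
Proof.
  apply first_integral_of_derive_0; intros a b r th z pR pS t Hsol Ht.
  unfold F3. orbital_derivative_0 Hsol Ht.
Qed.

Lemma F1_sq_plus_F2_sq (k r th z pR pS : R) :
  F1 k r th z pR pS ^ 2 + F2 k r th z pR pS ^ 2 = A_coef r z pR pS ^ 2 + B_coef k r z pR pS ^ 2.
Proof.
  rewrite <- (Rmult_1_l (A_coef r z pR pS ^ 2 + _)), <- (sin2_cos2 (2 * th)).
  unfold F1, F2, Rsqr. ring.
Qed.

Lemma F1_F2_relation (k r th z pR pS : R) : 0 < r ->
  F1 k r th z pR pS ^ 2 + F2 k r th z pR pS ^ 2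
  = 2 * Ham k r th z pR pS * F3 k r th z pR pS + k ^ 2.
Proof.
  intros Hr. rewrite F1_sq_plus_F2_sq. apply Rminus_diag_uniq.
  pose proof (rho_pos r z Hr) as Hrho.
  pose proof (pow2_sqrt _ (Rlt_le _ _ Hrho)) as HS.
  pose proof (sqrt_lt_R0 _ Hrho) as HS0.
  unfold Ham, F3, A_coef, B_coef.
  set (S := sqrt (rho r z)) in *. unfold rho in HS.
  field_mod_sqrt HS; lra.
Qed.

(** * Jacobian minors *)

Definition det3 (u1 u2 u3 v1 v2 v3 w1 w2 w3 : R) : R :=
  u1 * (v2 * w3 - v3 * w2) - v1 * (u2 * w3 - u3 * w2) + w1 * (u2 * v3 - u3 * v2).

Lemma det3_kernel_trivial (a b c u1 u2 u3 v1 v2 v3 w1 w2 w3 : R) :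
  det3 u1 u2 u3 v1 v2 v3 w1 w2 w3 <> 0 ->
  a * u1 + b * v1 + c * w1 = 0 -> a * u2 + b * v2 + c * w2 = 0 -> a * u3 + b * v3 + c * w3 = 0 ->
  a = 0 /\ b = 0 /\ c = 0.
Proof.
  intros HD E1 E2 E3.
  set (e1 := a * u1 + b * v1 + c * w1) in E1.
  set (e2 := a * u2 + b * v2 + c * w2) in E2.
  set (e3 := a * u3 + b * v3 + c * w3) in E3.
  assert (Ha : a * det3 u1 u2 u3 v1 v2 v3 w1 w2 w3 =
    e1 * (v2 * w3 - v3 * w2) + e2 * (v3 * w1 - v1 * w3) + e3 * (v1 * w2 - v2 * w1))
    by (unfold e1, e2, e3, det3; ring).
  assert (Hb : b * det3 u1 u2 u3 v1 v2 v3 w1 w2 w3 =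
    e1 * (w2 * u3 - w3 * u2) + e2 * (w3 * u1 - w1 * u3) + e3 * (w1 * u2 - w2 * u1))
    by (unfold e1, e2, e3, det3; ring).
  assert (Hc : c * det3 u1 u2 u3 v1 v2 v3 w1 w2 w3 =
    e1 * (u2 * v3 - u3 * v2) + e2 * (u3 * v1 - u1 * v3) + e3 * (u1 * v2 - u2 * v1))
    by (unfold e1, e2, e3, det3; ring).
  rewrite E1, E2, E3, !Rmult_0_l, !Rplus_0_r in Ha, Hb, Hc.
  repeat split.
  - apply Rmult_integral in Ha as [Ha | Ha]; [exact Ha | contradiction].
  - apply Rmult_integral in Hb as [Hb | Hb]; [exact Hb | contradiction].
  - apply Rmult_integral in Hc as [Hc | Hc]; [exact Hc | contradiction].
Qed.

Definition grad_minor (f g h : phasefun) (r th z pR pS : R) : R :=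
  det3 (d_th f r th z pR pS) (d_pR f r th z pR pS) (d_pS f r th z pR pS)
       (d_th g r th z pR pS) (d_pR g r th z pR pS) (d_pS g r th z pR pS)
       (d_th h r th z pR pS) (d_pR h r th z pR pS) (d_pS h r th z pR pS).

Lemma indep_at_of_grad_minor (f g h : phasefun) (r th z pR pS : R) :
  grad_minor f g h r th z pR pS <> 0 -> indep_at f g h r th z pR pS.
Proof.
  intros HD a b c _ Eth _ ER ES. exact (det3_kernel_trivial _ _ _ _ _ _ _ _ _ _ _ _ HD Eth ER ES).
Qed.

Section Gradients.
Variables (k r th z pR pS : R).
Hypothesis Hr : 0 < r.

Ltac partial_derivative :=
  pose proof (rho_pos r z Hr) as Hrho; unfold rho in Hrho; simpl pow in Hrho;
  apply is_derive_unique; unfold Ham, F1, F2, F3, A_coef, B_coef, rho; auto_derive;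
  [ repeat split; apply Rgt_not_eq; first [nra | apply sqrt_lt_R0; lra] ..
  | simpl pow; field; repeat split; apply Rgt_not_eq; first [nra | apply sqrt_lt_R0; lra] ].

Lemma d_th_Ham : d_th (Ham k) r th z pR pS = 0.
Proof. partial_derivative. Qed.

Lemma d_pR_Ham : d_pR (Ham k) r th z pR pS = pR.
Proof. partial_derivative. Qed.

Lemma d_pS_Ham : d_pS (Ham k) r th z pR pS = pS / r ^ 2.
Proof. partial_derivative. Qed.

Lemma d_th_F3 : d_th (F3 k) r th z pR pS = 0.
Proof. partial_derivative. Qed.

Lemma d_pR_F3 : d_pR (F3 k) r th z pR pS = 4 * z * (2 * z * pR - r * pS).
Proof. partial_derivative. Qed.

Lemma d_pS_F3 : d_pS (F3 k) r th z pR pS = -2 * r * (2 * z * pR - r * pS) + 8 * z ^ 2 * pS / r ^ 2.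
Proof. partial_derivative. Qed.

Lemma d_th_F1 : d_th (F1 k) r th z pR pS = 2 * F2 k r th z pR pS.
Proof. partial_derivative. Qed.

Lemma d_th_F2 : d_th (F2 k) r th z pR pS = -2 * F1 k r th z pR pS.
Proof. partial_derivative. Qed.

Lemma d_pR_F1 : d_pR (F1 k) r th z pR pS =
  cos (2 * th) * (pS * r - 4 * pR * z) + sin (2 * th) * (4 * pS * z / r).
Proof. partial_derivative. Qed.

Lemma d_pS_F1 : d_pS (F1 k) r th z pR pS =
  cos (2 * th) * (pR * r + 4 * pS * z / r ^ 2) + sin (2 * th) * (4 * pR * z / r - 2 * pS).
Proof. partial_derivative. Qed.

Lemma d_pR_F2 : d_pR (F2 k) r th z pR pS =
  - sin (2 * th) * (pS * r - 4 * pR * z) + cos (2 * th) * (4 * pS * z / r).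
Proof. partial_derivative. Qed.

Lemma d_pS_F2 : d_pS (F2 k) r th z pR pS =
  - sin (2 * th) * (pR * r + 4 * pS * z / r ^ 2) + cos (2 * th) * (4 * pR * z / r - 2 * pS).
Proof. partial_derivative. Qed.

Lemma grad_minor_Ham_F1_F3 :
  grad_minor (Ham k) (F1 k) (F3 k) r th z pR pS = -4 * r * A_coef r z pR pS * F2 k r th z pR pS.
Proof.
  unfold grad_minor.
  rewrite d_th_Ham, d_pR_Ham, d_pS_Ham, d_th_F1, d_pR_F1, d_pS_F1, d_th_F3, d_pR_F3, d_pS_F3.
  unfold det3, A_coef. field. lra.
Qed.

Lemma grad_minor_Ham_F2_F3 :
  grad_minor (Ham k) (F2 k) (F3 k) r th z pR pS = 4 * r * A_coef r z pR pS * F1 k r th z pR pS.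
Proof.
  unfold grad_minor.
  rewrite d_th_Ham, d_pR_Ham, d_pS_Ham, d_th_F2, d_pR_F2, d_pS_F2, d_th_F3, d_pR_F3, d_pS_F3.
  unfold det3, A_coef. field. lra.
Qed.

Lemma grad_minor_Ham_F1_F2 :
  grad_minor (Ham k) (F1 k) (F2 k) r th z pR pS = -4 * r * Ham k r th z pR pS * A_coef r z pR pS.
Proof.
  unfold grad_minor.
  rewrite d_th_Ham, d_pR_Ham, d_pS_Ham, d_th_F1, d_pR_F1, d_pS_F1, d_th_F2, d_pR_F2, d_pS_F2.
  pose proof (sqrt_lt_R0 _ (rho_pos r z Hr)).
  (* A rational identity once the right-hand side is multiplied by [sin^2 + cos^2]. *)
  rewrite <- (Rmult_1_l (_ * A_coef r z pR pS)), <- (sin2_cos2 (2 * th)).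
  unfold det3, F1, F2, Ham, A_coef, B_coef, Rsqr. field. lra.
Qed.

Lemma grad_minor_F1_F2_F3 :
  grad_minor (F1 k) (F2 k) (F3 k) r th z pR pS = 4 * r * A_coef r z pR pS * F3 k r th z pR pS.
Proof.
  unfold grad_minor.
  rewrite d_th_F1, d_pR_F1, d_pS_F1, d_th_F2, d_pR_F2, d_pS_F2, d_th_F3, d_pR_F3, d_pS_F3.
  pose proof (sqrt_lt_R0 _ (rho_pos r z Hr)).
  rewrite <- (Rmult_1_l (_ * F3 k r th z pR pS)), <- (sin2_cos2 (2 * th)).
  unfold det3, F1, F2, F3, A_coef, B_coef, Rsqr. field. lra.
Qed.

End Gradients.

(** * Null subsets of R^5 *)

Definition set5 : Type := R -> R -> R -> R -> R -> Prop.

Definition in_box (lo hi : nat -> R) (x0 x1 x2 x3 x4 : R) : Prop :=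
  lo 0%nat <= x0 <= hi 0%nat /\ lo 1%nat <= x1 <= hi 1%nat /\ lo 2%nat <= x2 <= hi 2%nat /\
  lo 3%nat <= x3 <= hi 3%nat /\ lo 4%nat <= x4 <= hi 4%nat.

Definition box_vol (lo hi : nat -> R) : R :=
  (hi 0%nat - lo 0%nat) * (hi 1%nat - lo 1%nat) * (hi 2%nat - lo 2%nat)
  * (hi 3%nat - lo 3%nat) * (hi 4%nat - lo 4%nat).

Definition box_cover (P : set5) (eps : R) (lo hi : nat -> nat -> R) : Prop :=
  (forall n j, lo n j <= hi n j) /\
  (forall x0 x1 x2 x3 x4, P x0 x1 x2 x3 x4 -> exists n, in_box (lo n) (hi n) x0 x1 x2 x3 x4) /\
  (forall N, sum_f_R0 (fun n => box_vol (lo n) (hi n)) N <= eps).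

Lemma null5_box_cover (P : set5) :
  null5 P <-> forall eps, 0 < eps -> exists lo hi, box_cover P eps lo hi.
Proof. reflexivity. Qed.

Lemma box_vol_nonneg (lo hi : nat -> R) : (forall j, lo j <= hi j) -> 0 <= box_vol lo hi.
Proof.
  intros H. unfold box_vol.
  generalize (H 0%nat) (H 1%nat) (H 2%nat) (H 3%nat) (H 4%nat). intros.
  repeat apply Rmult_le_pos; lra.
Qed.

Lemma null5_mono (P Q : set5) :
  (forall x0 x1 x2 x3 x4, P x0 x1 x2 x3 x4 -> Q x0 x1 x2 x3 x4) -> null5 Q -> null5 P.
Proof.
  intros HPQ HQ eps Heps. destruct (HQ eps Heps) as (lo & hi & Hle & Hcov & Hsum).
  exists lo, hi. split; [exact Hle | split; [| exact Hsum]].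
  intros x0 x1 x2 x3 x4 Hx. now apply Hcov, HPQ.
Qed.

Lemma sum_f_R0_le_mono (w : nat -> R) (N M : nat) :
  (forall n, 0 <= w n) -> (N <= M)%nat -> sum_f_R0 w N <= sum_f_R0 w M.
Proof.
  intros Hw HNM. destruct (Nat.eq_dec N M) as [<- | HNM']; [lra |].
  rewrite (tech2 w N M) by lia.
  generalize (cond_pos_sum (fun i => w (S N + i)%nat) (M - S N) (fun i => Hw _)). lra.
Qed.

(* [unpair] inverts [(m, i) |-> 2 ^ m * (2 * i + 1) - 1]; the fuel [S n] always suffices. *)
Fixpoint unpair_fuel (fuel n : nat) : nat * nat :=
  match fuel with
  | O => (O, O)
  | S f => if Nat.even n then (O, Nat.div2 n)
           else let p := unpair_fuel f (Nat.div2 n) in (S (fst p), snd p)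
  end.

Definition unpair (n : nat) : nat * nat := unpair_fuel (S n) n.

Lemma unpair_fuel_enough (f f' n : nat) :
  (n < f)%nat -> (n < f')%nat -> unpair_fuel f n = unpair_fuel f' n.
Proof.
  revert f' n. induction f as [| f IH]; intros f' n Hf Hf'; [lia |].
  destruct f' as [| f']; [lia |]. simpl. destruct (Nat.even n) eqn:Hn; [reflexivity |].
  destruct n as [| n]; [discriminate |].
  pose proof (Nat.le_div2 n). now rewrite (IH f') by lia.
Qed.

Lemma unpair_fuel_succ (f n : nat) :
  unpair_fuel (S f) n =
  if Nat.even n then (O, Nat.div2 n)
  else (S (fst (unpair_fuel f (Nat.div2 n))), snd (unpair_fuel f (Nat.div2 n))).
Proof. reflexivity. Qed.

Lemma unpair_double (i : nat) : unpair (2 * i) = (O, i).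
Proof.
  unfold unpair. now rewrite unpair_fuel_succ, Nat.even_mul, Nat.div2_double.
Qed.

Lemma unpair_succ_double (i : nat) :
  unpair (S (2 * i)) = (S (fst (unpair i)), snd (unpair i)).
Proof.
  unfold unpair. rewrite unpair_fuel_succ, Nat.even_succ, Nat.odd_mul, Nat.div2_succ_double.
  now rewrite (unpair_fuel_enough _ (S i)) by lia.
Qed.

Lemma unpair_surj (m i : nat) : exists n, unpair n = (m, i).
Proof.
  induction m as [| m [n Hn]].
  - exists (2 * i)%nat. apply unpair_double.
  - exists (S (2 * n)). now rewrite unpair_succ_double, Hn.
Qed.

Lemma sum_unpair_le (w : nat -> nat -> R) (eps : R) :
  (forall m i, 0 <= w m i) -> (forall m N, sum_f_R0 (w m) N <= eps / 2 ^ S m) ->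
  forall N, sum_f_R0 (fun n => w (fst (unpair n)) (snd (unpair n))) N <= eps.
Proof.
  intros Hw Hrow N. revert w eps Hw Hrow.
  induction N as [N IH] using (well_founded_induction lt_wf); intros w eps Hw Hrow.
  assert (Heps : 0 <= eps).
  { generalize (Hrow O O) (Hw O O). simpl. lra. }
  destruct N as [| N].
  { replace (unpair 0) with (O, O) by reflexivity. generalize (Hrow O O). simpl. lra. }
  apply Rle_trans with (sum_f_R0 (fun n => w (fst (unpair n)) (snd (unpair n))) (2 * S N)).
  { apply sum_f_R0_le_mono; [intros; apply Hw | lia]. }
  (* Even indices enumerate row [0]; odd ones enumerate the shifted rows [w (S m)], whose sums
     are bounded as required for [eps / 2]. *)
  rewrite <- sum_decomposition.
  rewrite (sum_eq _ (w O)) by (intros; cbv beta; now rewrite unpair_double).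
  rewrite (sum_eq (fun l => w (fst (unpair (S (2 * l)))) (snd (unpair (S (2 * l)))))
                  (fun l => w (S (fst (unpair l))) (snd (unpair l))))
    by (intros; cbv beta; now rewrite unpair_succ_double).
  assert (Hshift : sum_f_R0 (fun l => w (S (fst (unpair l))) (snd (unpair l))) N <= eps / 2).
  { apply (IH N (Nat.lt_succ_diag_r N) (fun m => w (S m))); [intros; apply Hw |].
    intros m M.
    replace (eps / 2 / 2 ^ S m) with (eps / 2 ^ S (S m)) by (simpl; field; apply pow_nonzero; lra).
    apply Hrow. }
  generalize (Hrow O (S N)). simpl. lra.
Qed.

Lemma null5_countable_union (P : nat -> set5) :
  (forall m, null5 (P m)) -> null5 (fun x0 x1 x2 x3 x4 => exists m, P m x0 x1 x2 x3 x4).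
Proof.
  intros HP. apply null5_box_cover. intros eps Heps.
  destruct (functional_choice
              (fun m (c : (nat -> nat -> R) * (nat -> nat -> R)) =>
                 box_cover (P m) (eps / 2 ^ S m) (fst c) (snd c))) as [c Hc].
  { intros m. destruct (HP m (eps / 2 ^ S m)) as (lo & hi & H).
    - apply Rdiv_lt_0_compat; [lra | apply pow_lt; lra].
    - now exists (lo, hi). }
  exists (fun n => fst (c (fst (unpair n))) (snd (unpair n))),
         (fun n => snd (c (fst (unpair n))) (snd (unpair n))).
  split; [| split].
  - intros n j. apply (Hc (fst (unpair n))).
  - intros x0 x1 x2 x3 x4 [m Hm].
    destruct (proj1 (proj2 (Hc m)) _ _ _ _ _ Hm) as [i Hi].
    destruct (unpair_surj m i) as [n Hn]. exists n. now rewrite Hn.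
  - apply (sum_unpair_le (fun m i => box_vol (fst (c m) i) (snd (c m) i))).
    + intros m i. apply box_vol_nonneg. intros j. apply (Hc m).
    + intros m. apply (Hc m).
Qed.

Lemma null5_union (P Q : set5) :
  null5 P -> null5 Q -> null5 (fun x0 x1 x2 x3 x4 => P x0 x1 x2 x3 x4 \/ Q x0 x1 x2 x3 x4).
Proof.
  intros HP HQ.
  apply null5_mono with (fun x0 x1 x2 x3 x4 =>
    exists m, match m with O => P | S _ => Q end x0 x1 x2 x3 x4).
  - intros x0 x1 x2 x3 x4 [Hx | Hx]; [now exists O | now exists 1%nat].
  - apply null5_countable_union. now intros [| m].
Qed.

Lemma null5_relabel (P Q : set5) (sigma : nat -> nat) :
  (forall lo hi, box_vol (fun j => lo (sigma j)) (fun j => hi (sigma j)) = box_vol lo hi) ->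
  (forall x0 x1 x2 x3 x4, P x0 x1 x2 x3 x4 -> exists y0 y1 y2 y3 y4, Q y0 y1 y2 y3 y4 /\
     forall lo hi, in_box lo hi y0 y1 y2 y3 y4 ->
       in_box (fun j => lo (sigma j)) (fun j => hi (sigma j)) x0 x1 x2 x3 x4) ->
  null5 Q -> null5 P.
Proof.
  intros Hvol HPQ HQ eps Heps. destruct (HQ eps Heps) as (lo & hi & Hle & Hcov & Hsum).
  exists (fun n j => lo n (sigma j)), (fun n j => hi n (sigma j)).
  split; [| split].
  - intros n j. apply Hle.
  - intros x0 x1 x2 x3 x4 Hx.
    destruct (HPQ _ _ _ _ _ Hx) as (y0 & y1 & y2 & y3 & y4 & Hy & Hin).
    destruct (Hcov _ _ _ _ _ Hy) as [n Hn]. exists n. now apply Hin.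
  - intros N. rewrite (sum_eq _ (fun n => box_vol (lo n) (hi n))) by (intros; apply Hvol).
    apply Hsum.
Qed.

Definition swap_last (i j : nat) : nat :=
  if Nat.eqb j i then 4%nat else if Nat.eqb j 4 then i else j.

Ltac relabel_by_swap i :=
  apply (null5_relabel _ _ (swap_last i));
  [ intros lo hi; unfold box_vol, swap_last; simpl; ring
  | intros x0 x1 x2 x3 x4 Hx; do 5 eexists; split; [exact Hx |];
    unfold in_box, swap_last; simpl; tauto ].

Lemma null5_swap_1_4 (P : set5) :
  null5 (fun x0 x1 x2 x3 x4 => P x0 x4 x2 x3 x1) -> null5 P.
Proof. relabel_by_swap 1%nat. Qed.

Lemma null5_swap_2_4 (P : set5) :
  null5 (fun x0 x1 x2 x3 x4 => P x0 x1 x4 x3 x2) -> null5 P.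
Proof. relabel_by_swap 2%nat. Qed.

Lemma null5_swap_3_4 (P : set5) :
  null5 (fun x0 x1 x2 x3 x4 => P x0 x1 x2 x4 x3) -> null5 P.
Proof. relabel_by_swap 3%nat. Qed.

Definition finite_box_cover (P : set5) (T : nat) (v : R) : Prop :=
  exists lo hi : nat -> nat -> R,
    (forall n j, lo n j <= hi n j) /\
    (forall x0 x1 x2 x3 x4, P x0 x1 x2 x3 x4 ->
       exists n, (n < T)%nat /\ in_box (lo n) (hi n) x0 x1 x2 x3 x4) /\
    (forall n, (n < T)%nat -> box_vol (lo n) (hi n) <= v).

Lemma finite_box_cover_mono (P Q : set5) (T : nat) (v : R) :
  (forall x0 x1 x2 x3 x4, P x0 x1 x2 x3 x4 -> Q x0 x1 x2 x3 x4) ->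
  finite_box_cover Q T v -> finite_box_cover P T v.
Proof.
  intros HPQ (lo & hi & Hle & Hcov & Hvol). exists lo, hi.
  split; [exact Hle | split; [| exact Hvol]].
  intros x0 x1 x2 x3 x4 Hx. now apply Hcov, HPQ.
Qed.

Lemma finite_box_cover_union (P Q : set5) (T1 T2 : nat) (v : R) :
  finite_box_cover P T1 v -> finite_box_cover Q T2 v ->
  finite_box_cover (fun x0 x1 x2 x3 x4 => P x0 x1 x2 x3 x4 \/ Q x0 x1 x2 x3 x4) (T1 + T2) v.
Proof.
  intros (lo1 & hi1 & Hle1 & Hcov1 & Hvol1) (lo2 & hi2 & Hle2 & Hcov2 & Hvol2).
  exists (fun n => if (n <? T1)%nat then lo1 n else lo2 (n - T1)%nat),
         (fun n => if (n <? T1)%nat then hi1 n else hi2 (n - T1)%nat).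
  split; [| split].
  - intros n j. destruct (n <? T1)%nat; auto.
  - intros x0 x1 x2 x3 x4 [Hx | Hx].
    + destruct (Hcov1 _ _ _ _ _ Hx) as (n & Hn & Hin). exists n.
      rewrite (proj2 (Nat.ltb_lt n T1) Hn). split; [lia | exact Hin].
    + destruct (Hcov2 _ _ _ _ _ Hx) as (n & Hn & Hin). exists (T1 + n)%nat.
      rewrite (proj2 (Nat.ltb_ge (T1 + n) T1)) by lia.
      replace (T1 + n - T1)%nat with n by lia. split; [lia | exact Hin].
  - intros n Hn. destruct (Nat.ltb_spec n T1); [now apply Hvol1 | apply Hvol2; lia].
Qed.

Lemma finite_box_cover_bigunion (P : nat -> set5) (M T : nat) (v : R) :
  (forall i, (i < M)%nat -> finite_box_cover (P i) T v) ->
  finite_box_cover (fun x0 x1 x2 x3 x4 => exists i, (i < M)%nat /\ P i x0 x1 x2 x3 x4) (M * T) v.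
Proof.
  induction M as [| M IH]; intros HP.
  - exists (fun _ _ => 0), (fun _ _ => 0). split; [| split].
    + intros. lra.
    + intros x0 x1 x2 x3 x4 (i & Hi & _). lia.
    + intros n Hn. lia.
  - apply finite_box_cover_mono with (fun x0 x1 x2 x3 x4 =>
      P M x0 x1 x2 x3 x4 \/ exists i, (i < M)%nat /\ P i x0 x1 x2 x3 x4).
    + intros x0 x1 x2 x3 x4 (i & Hi & Hx).
      destruct (Nat.eq_dec i M) as [-> | HiM]; [now left |].
      right. exists i. split; [lia | exact Hx].
    + apply finite_box_cover_union; [apply HP; lia |].
      apply IH. intros i Hi. apply HP. lia.
Qed.

Lemma sum_truncated_le (w : nat -> R) (T : nat) (v : R) :
  0 <= v -> (forall n, (n < T)%nat -> w n <= v) ->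
  forall N, sum_f_R0 (fun n => if (n <? T)%nat then w n else 0) N <= INR T * v.
Proof.
  intros Hv Hw N.
  enough (H : sum_f_R0 (fun n => if (n <? T)%nat then w n else 0) N <= INR (Nat.min (S N) T) * v).
  { apply Rle_trans with (1 := H), Rmult_le_compat_r; [exact Hv | apply le_INR; lia]. }
  induction N as [| N IH]; simpl sum_f_R0.
  - destruct (Nat.ltb_spec 0 T); [| replace T with O by lia; simpl; lra].
    rewrite Nat.min_l by lia. simpl. rewrite Rmult_1_l. auto.
  - destruct (Nat.ltb_spec (S N) T).
    + rewrite Nat.min_l in * by lia. rewrite S_INR. specialize (Hw (S N) ltac:(lia)). lra.
    + rewrite Nat.min_r in * by lia. lra.
Qed.

Lemma null5_of_finite_box_covers (P : set5) :
  (forall eps, 0 < eps -> exists T v, 0 <= v /\ finite_box_cover P T v /\ INR T * v <= eps) ->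
  null5 P.
Proof.
  intros HP eps Heps. destruct (HP eps Heps) as (T & v & Hv & (lo & hi & Hle & Hcov & Hvol) & HTv).
  exists (fun n => if (n <? T)%nat then lo n else fun _ => 0),
         (fun n => if (n <? T)%nat then hi n else fun _ => 0).
  split; [| split].
  - intros n j. destruct (n <? T)%nat; [apply Hle | lra].
  - intros x0 x1 x2 x3 x4 Hx. destruct (Hcov _ _ _ _ _ Hx) as (n & Hn & Hin).
    exists n. now rewrite (proj2 (Nat.ltb_lt n T) Hn).
  - intros N. apply Rle_trans with (2 := HTv).
    rewrite (sum_eq _ (fun n => if (n <? T)%nat then box_vol (lo n) (hi n) else 0))
      by (intros n _; destruct (n <? T)%nat; [reflexivity | unfold box_vol; ring]).
    now apply sum_truncated_le.
Qed.

Definition dist4 (a b c d a' b' c' d' : R) : R :=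
  Rabs (a - a') + Rabs (b - b') + Rabs (c - c') + Rabs (d - d').

Definition lipschitz_on (K : R -> R -> R -> R -> Prop) (L : R) (g : R -> R -> R -> R -> R) : Prop :=
  forall a b c d a' b' c' d', K a b c d -> K a' b' c' d' ->
    Rabs (g a b c d - g a' b' c' d') <= L * dist4 a b c d a' b' c' d'.

Definition in_cube (c0 c1 c2 c3 h a b c d : R) : Prop :=
  c0 <= a <= c0 + h /\ c1 <= b <= c1 + h /\ c2 <= c <= c2 + h /\ c3 <= d <= c3 + h.

Definition vec5 (x0 x1 x2 x3 x4 : R) (j : nat) : R :=
  match j with O => x0 | 1 => x1 | 2 => x2 | 3 => x3 | _ => x4 end%nat.

Lemma finite_box_cover_graph_cube (K : R -> R -> R -> R -> Prop) (g : R -> R -> R -> R -> R)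
    (L c0 c1 c2 c3 h : R) :
  0 <= L -> 0 <= h -> lipschitz_on K L g ->
  finite_box_cover (fun a b c d e => K a b c d /\ in_cube c0 c1 c2 c3 h a b c d /\ e = g a b c d)
    1 (h ^ 4 * (8 * L * h)).
Proof.
  intros HL Hh Hg.
  assert (HLh : 0 <= L * h) by now apply Rmult_le_pos.
  destruct (classic (exists a b c d, K a b c d /\ in_cube c0 c1 c2 c3 h a b c d))
    as [(a' & b' & c' & d' & HK' & Hin') | Hempty].
  - set (e' := g a' b' c' d').
    exists (fun _ => vec5 c0 c1 c2 c3 (e' - 4 * L * h)),
           (fun _ => vec5 (c0 + h) (c1 + h) (c2 + h) (c3 + h) (e' + 4 * L * h)).
    split; [| split].
    + intros _ [| [| [| [| j]]]]; simpl; lra.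
    + intros a b c d e (HK & Hin & ->). exists O. split; [lia |].
      assert (Hdist : dist4 a b c d a' b' c' d' <= 4 * h).
      { unfold in_cube, dist4 in *.
        assert (Rabs (a - a') <= h) by (apply Rabs_le; lra).
        assert (Rabs (b - b') <= h) by (apply Rabs_le; lra).
        assert (Rabs (c - c') <= h) by (apply Rabs_le; lra).
        assert (Rabs (d - d') <= h) by (apply Rabs_le; lra). lra. }
      assert (He : Rabs (g a b c d - e') <= 4 * L * h).
      { apply Rle_trans with (1 := Hg _ _ _ _ _ _ _ _ HK HK').
        replace (4 * L * h) with (L * (4 * h)) by ring. now apply Rmult_le_compat_l. }
      apply Rabs_le_between in He. unfold in_cube, in_box in *. simpl. lra.
    + intros n _. unfold box_vol. simpl. right. ring.
  - exists (fun _ _ => 0), (fun _ _ => 0). split; [| split].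
    + intros. lra.
    + intros a b c d e (HK & Hin & _). exfalso. apply Hempty. now exists a, b, c, d.
    + intros n _. unfold box_vol. rewrite Rminus_diag, !Rmult_0_l.
      apply Rmult_le_pos; [apply pow_le; lra | lra].
Qed.

Lemma cube_index (M : nat) (h x : R) :
  0 < h -> (0 < M)%nat -> 0 <= x <= INR M * h ->
  exists i, (i < M)%nat /\ INR i * h <= x <= INR i * h + h.
Proof.
  intros Hh. induction M as [| M IH]; intros HM Hx; [lia |].
  destruct (Nat.eq_dec M 0) as [-> | HM0].
  - exists O. simpl in *. split; [lia | lra].
  - destruct (Rle_dec x (INR M * h)) as [Hle | Hgt].
    + destruct IH as (i & Hi & Hxi); [lia | lra |]. exists i. split; [lia | exact Hxi].
    + exists M. rewrite S_INR in Hx. split; [lia | lra].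
Qed.

(* Over each of the M^4 cubes of side h cutting [-N, N]^4, the graph fits in one box. *)
Lemma finite_box_cover_lipschitz_graph (K : R -> R -> R -> R -> Prop) (g : R -> R -> R -> R -> R)
    (N L : R) (M : nat) :
  0 < N -> 0 <= L -> (0 < M)%nat ->
  (forall a b c d, K a b c d -> Rabs a <= N /\ Rabs b <= N /\ Rabs c <= N /\ Rabs d <= N) ->
  lipschitz_on K L g ->
  let h := 2 * N / INR M in
  finite_box_cover (fun a b c d e => K a b c d /\ e = g a b c d) (M ^ 4) (h ^ 4 * (8 * L * h)).
Proof.
  intros HN HL HM HK Hg h.
  assert (Hh : 0 < h) by (apply Rdiv_lt_0_compat; [lra | now apply lt_0_INR]).
  assert (HMh : INR M * h = 2 * N) by (unfold h; field; apply not_0_INR; lia).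
  apply finite_box_cover_mono with (fun a b c d e =>
    exists i0, (i0 < M)%nat /\ exists i1, (i1 < M)%nat /\
    exists i2, (i2 < M)%nat /\ exists i3, (i3 < M)%nat /\
    (K a b c d /\ in_cube (- N + INR i0 * h) (- N + INR i1 * h) (- N + INR i2 * h)
                          (- N + INR i3 * h) h a b c d /\ e = g a b c d)).
  - intros a b c d e (Habcd & He).
    destruct (HK a b c d Habcd) as (Ha & Hb & Hc & Hd).
    apply Rabs_le_between in Ha, Hb, Hc, Hd.
    destruct (cube_index M h (a + N)) as (i0 & Hi0 & H0); [lra | exact HM | lra |].
    destruct (cube_index M h (b + N)) as (i1 & Hi1 & H1); [lra | exact HM | lra |].
    destruct (cube_index M h (c + N)) as (i2 & Hi2 & H2); [lra | exact HM | lra |].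
    destruct (cube_index M h (d + N)) as (i3 & Hi3 & H3); [lra | exact HM | lra |].
    exists i0; split; [exact Hi0 |]. exists i1; split; [exact Hi1 |].
    exists i2; split; [exact Hi2 |]. exists i3; split; [exact Hi3 |].
    split; [exact Habcd | split; [unfold in_cube; repeat split; lra | exact He]].
  - do 4 (apply finite_box_cover_bigunion; intros ? _).
    apply finite_box_cover_graph_cube; [exact HL | lra | exact Hg].
Qed.

Lemma null5_lipschitz_graph (K : R -> R -> R -> R -> Prop) (g : R -> R -> R -> R -> R) (N L : R) :
  0 < N -> 0 <= L ->
  (forall a b c d, K a b c d -> Rabs a <= N /\ Rabs b <= N /\ Rabs c <= N /\ Rabs d <= N) ->
  lipschitz_on K L g ->
  null5 (fun a b c d e => K a b c d /\ e = g a b c d).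
Proof.
  intros HN HL HK Hg. apply null5_of_finite_box_covers. intros eps Heps.
  destruct (INR_unbounded (8 * L * (2 * N) ^ 5 / eps)) as [M0 HM0].
  set (M := S M0).
  assert (HMpos : 0 < INR M) by (apply lt_0_INR; unfold M; lia).
  assert (HM : 8 * L * (2 * N) ^ 5 < INR M * eps)
    by (apply Rlt_div_l; [exact Heps | unfold M; rewrite S_INR; lra]).
  set (h := 2 * N / INR M).
  exists (M ^ 4)%nat, (h ^ 4 * (8 * L * h)). split; [| split].
  - assert (0 < h) by (apply Rdiv_lt_0_compat; lra).
    apply Rmult_le_pos; [apply pow_le |]; nra.
  - apply finite_box_cover_lipschitz_graph; auto. unfold M. lia.
  - rewrite pow_INR.
    replace (INR M ^ 4 * (h ^ 4 * (8 * L * h))) with (8 * L * (2 * N) ^ 5 / INR M)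
      by (unfold h; field; lra).
    apply Rle_div_l; lra.
Qed.

(** * Bounded Lipschitz functions on compact pieces of R^4 *)

Lemma dist4_nonneg (a b c d a' b' c' d' : R) : 0 <= dist4 a b c d a' b' c' d'.
Proof.
  unfold dist4.
  generalize (Rabs_pos (a - a')) (Rabs_pos (b - b')) (Rabs_pos (c - c')) (Rabs_pos (d - d')). lra.
Qed.

Definition bounded_lipschitz_on (K : R -> R -> R -> R -> Prop) (f : R -> R -> R -> R -> R) : Prop :=
  exists M L, 0 <= L /\ (forall a b c d, K a b c d -> Rabs (f a b c d) <= M) /\ lipschitz_on K L f.

Section BoundedLipschitz.
Variable K : R -> R -> R -> R -> Prop.

Lemma bounded_lipschitz_const (x : R) : bounded_lipschitz_on K (fun _ _ _ _ => x).
Proof.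
  exists (Rabs x), 0. split; [lra | split; [intros; lra |]].
  intros a b c d a' b' c' d' _ _. rewrite Rminus_diag, Rabs_R0, Rmult_0_l. lra.
Qed.

Lemma bounded_lipschitz_1 (f : R -> R -> R -> R -> R) (N : R) :
  (forall a b c d, K a b c d -> Rabs (f a b c d) <= N) ->
  (forall a b c d a' b' c' d',
     Rabs (f a b c d - f a' b' c' d') <= dist4 a b c d a' b' c' d') ->
  bounded_lipschitz_on K f.
Proof.
  intros Hb Hl. exists N, 1. split; [lra | split; [exact Hb |]].
  intros a b c d a' b' c' d' _ _. rewrite Rmult_1_l. apply Hl.
Qed.

Lemma bounded_lipschitz_plus f g :
  bounded_lipschitz_on K f -> bounded_lipschitz_on K g ->
  bounded_lipschitz_on K (fun a b c d => f a b c d + g a b c d).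
Proof.
  intros (M1 & L1 & HL1 & HM1 & Hl1) (M2 & L2 & HL2 & HM2 & Hl2).
  exists (M1 + M2), (L1 + L2). split; [lra | split].
  - intros a b c d H. eapply Rle_trans; [apply Rabs_triang |].
    generalize (HM1 a b c d H) (HM2 a b c d H). lra.
  - intros a b c d a' b' c' d' H H'.
    replace (f a b c d + g a b c d - (f a' b' c' d' + g a' b' c' d'))
      with ((f a b c d - f a' b' c' d') + (g a b c d - g a' b' c' d')) by ring.
    eapply Rle_trans; [apply Rabs_triang |].
    generalize (Hl1 _ _ _ _ _ _ _ _ H H') (Hl2 _ _ _ _ _ _ _ _ H H'). lra.
Qed.

Lemma bounded_lipschitz_opp f :
  bounded_lipschitz_on K f -> bounded_lipschitz_on K (fun a b c d => - f a b c d).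
Proof.
  intros (M & L & HL & HM & Hl). exists M, L. split; [exact HL | split].
  - intros a b c d H. rewrite Rabs_Ropp. auto.
  - intros a b c d a' b' c' d' H H'.
    replace (- f a b c d - - f a' b' c' d') with (- (f a b c d - f a' b' c' d')) by ring.
    rewrite Rabs_Ropp. auto.
Qed.

Lemma bounded_lipschitz_minus f g :
  bounded_lipschitz_on K f -> bounded_lipschitz_on K g ->
  bounded_lipschitz_on K (fun a b c d => f a b c d - g a b c d).
Proof. intros Hf Hg. now apply bounded_lipschitz_plus, bounded_lipschitz_opp. Qed.

Lemma bounded_lipschitz_mult f g :
  bounded_lipschitz_on K f -> bounded_lipschitz_on K g ->
  bounded_lipschitz_on K (fun a b c d => f a b c d * g a b c d).
Proof.
  intros (M1 & L1 & HL1 & HM1 & Hl1) (M2 & L2 & HL2 & HM2 & Hl2).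
  assert (HM1' : forall a b c d, K a b c d -> Rabs (f a b c d) <= Rabs M1)
    by (intros; eapply Rle_trans; [apply HM1; assumption | apply Rle_abs]).
  assert (HM2' : forall a b c d, K a b c d -> Rabs (g a b c d) <= Rabs M2)
    by (intros; eapply Rle_trans; [apply HM2; assumption | apply Rle_abs]).
  exists (Rabs M1 * Rabs M2), (Rabs M1 * L2 + Rabs M2 * L1). split; [| split].
  - generalize (Rabs_pos M1) (Rabs_pos M2). nra.
  - intros a b c d H. rewrite Rabs_mult.
    apply Rmult_le_compat; auto using Rabs_pos.
  - intros a b c d a' b' c' d' H H'.
    replace (f a b c d * g a b c d - f a' b' c' d' * g a' b' c' d')
      with (f a b c d * (g a b c d - g a' b' c' d') + g a' b' c' d' * (f a b c d - f a' b' c' d'))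
      by ring.
    eapply Rle_trans; [apply Rabs_triang |]. rewrite !Rabs_mult.
    specialize (Hl1 _ _ _ _ _ _ _ _ H H'). specialize (Hl2 _ _ _ _ _ _ _ _ H H').
    pose proof (HM1' _ _ _ _ H). pose proof (HM2' _ _ _ _ H').
    pose proof (dist4_nonneg a b c d a' b' c' d').
    pose proof (Rabs_pos (f a b c d)). pose proof (Rabs_pos (g a' b' c' d')).
    pose proof (Rabs_pos (g a b c d - g a' b' c' d')).
    pose proof (Rabs_pos (f a b c d - f a' b' c' d')).
    nra.
Qed.

Lemma bounded_lipschitz_pow f (n : nat) :
  bounded_lipschitz_on K f -> bounded_lipschitz_on K (fun a b c d => f a b c d ^ n).
Proof.
  intros Hf. induction n as [| n IH]; simpl.
  - apply bounded_lipschitz_const.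
  - now apply bounded_lipschitz_mult.
Qed.

Lemma bounded_lipschitz_inv f (m : R) :
  0 < m -> (forall a b c d, K a b c d -> m <= Rabs (f a b c d)) ->
  bounded_lipschitz_on K f -> bounded_lipschitz_on K (fun a b c d => / f a b c d).
Proof.
  intros Hm Hf (M & L & HL & HM & Hl).
  exists (/ m), (L / (m * m)). split; [| split].
  - apply Rmult_le_pos; [exact HL |]. apply Rlt_le, Rinv_0_lt_compat. nra.
  - intros a b c d H. rewrite Rabs_inv. apply Rinv_le_contravar; auto.
  - intros a b c d a' b' c' d' H H'.
    pose proof (Hf _ _ _ _ H) as Hx. pose proof (Hf _ _ _ _ H') as Hy.
    assert (Hx0 : f a b c d <> 0) by (intros E; rewrite E, Rabs_R0 in Hx; lra).
    assert (Hy0 : f a' b' c' d' <> 0) by (intros E; rewrite E, Rabs_R0 in Hy; lra).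
    replace (/ f a b c d - / f a' b' c' d')
      with ((f a' b' c' d' - f a b c d) / (f a b c d * f a' b' c' d')) by (field; auto).
    unfold Rdiv. rewrite Rabs_mult, Rabs_inv, Rabs_mult, <- Rabs_Ropp, Ropp_minus_distr.
    apply Rle_trans with (L * dist4 a b c d a' b' c' d' * / (m * m)).
    + apply Rmult_le_compat; auto using Rabs_pos.
      * apply Rlt_le, Rinv_0_lt_compat, Rmult_lt_0_compat; apply Rabs_pos_lt; auto.
      * apply Rinv_le_contravar; [nra |]. apply Rmult_le_compat; lra.
    + right. unfold Rdiv. ring.
Qed.

Lemma Rabs_sqrt_minus_le (x y m : R) :
  0 < m -> m <= x -> m <= y -> Rabs (sqrt x - sqrt y) <= Rabs (x - y) / (2 * sqrt m).
Proof.
  intros Hm Hx Hy.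
  assert (Sm : 0 < sqrt m) by now apply sqrt_lt_R0.
  assert (Sx : sqrt m <= sqrt x) by now apply sqrt_le_1_alt.
  assert (Sy : sqrt m <= sqrt y) by now apply sqrt_le_1_alt.
  replace (x - y) with ((sqrt x - sqrt y) * (sqrt x + sqrt y))
    by (ring_simplify; rewrite !pow2_sqrt by lra; ring).
  rewrite Rabs_mult, (Rabs_pos_eq (sqrt x + sqrt y)) by lra.
  unfold Rdiv. rewrite Rmult_assoc.
  rewrite <- (Rmult_1_r (Rabs (sqrt x - sqrt y))) at 1.
  apply Rmult_le_compat_l; [apply Rabs_pos |].
  rewrite <- (Rinv_r (2 * sqrt m)) by lra.
  apply Rmult_le_compat_r; [apply Rlt_le, Rinv_0_lt_compat |]; lra.
Qed.

Lemma bounded_lipschitz_sqrt f (m : R) :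
  0 < m -> (forall a b c d, K a b c d -> m <= f a b c d) ->
  bounded_lipschitz_on K f -> bounded_lipschitz_on K (fun a b c d => sqrt (f a b c d)).
Proof.
  intros Hm Hf (M & L & HL & HM & Hl).
  assert (Sm : 0 < sqrt m) by now apply sqrt_lt_R0.
  exists (sqrt (Rabs M)), (L / (2 * sqrt m)). split; [| split].
  - apply Rmult_le_pos; [exact HL | apply Rlt_le, Rinv_0_lt_compat; lra].
  - intros a b c d H. rewrite Rabs_pos_eq by apply sqrt_pos. apply sqrt_le_1_alt.
    eapply Rle_trans; [apply Rle_abs |]. eapply Rle_trans; [apply HM; exact H | apply Rle_abs].
  - intros a b c d a' b' c' d' H H'.
    eapply Rle_trans; [apply (Rabs_sqrt_minus_le _ _ m); auto |].
    apply Rle_trans with (L * dist4 a b c d a' b' c' d' / (2 * sqrt m)).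
    + apply Rmult_le_compat_r; [apply Rlt_le, Rinv_0_lt_compat; lra | auto].
    + right. field. lra.
Qed.

Lemma Rabs_atan_minus_le (x y : R) : Rabs (atan x - atan y) <= Rabs (x - y).
Proof.
  destruct (MVT_gen atan y x (fun t => / (1 + t ^ 2))) as [c [_ Hc]].
  - intros t _. replace (t ^ 2) with (t²) by (unfold Rsqr; ring). apply is_derive_atan.
  - intros t _. apply continuity_pt_filterlim.
    refine (ex_derive_continuous atan t _). eexists. apply is_derive_atan.
  - rewrite Hc, Rabs_mult. rewrite <- (Rmult_1_l (Rabs (x - y))) at 2.
    apply Rmult_le_compat_r; [apply Rabs_pos |].
    pose proof (pow2_ge_0 c).
    rewrite Rabs_pos_eq by (apply Rlt_le, Rinv_0_lt_compat; lra).
    rewrite <- Rinv_1. apply Rinv_le_contravar; lra.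
Qed.

Lemma bounded_lipschitz_atan f :
  bounded_lipschitz_on K f -> bounded_lipschitz_on K (fun a b c d => atan (f a b c d)).
Proof.
  intros (M & L & HL & HM & Hl). exists (PI / 2), L. split; [exact HL | split].
  - intros a b c d _. apply Rabs_le. generalize (atan_bound (f a b c d)). lra.
  - intros a b c d a' b' c' d' H H'. eapply Rle_trans; [apply Rabs_atan_minus_le | auto].
Qed.

End BoundedLipschitz.

Definition exhaustion (q : R -> R -> R -> R -> R) (n : nat) (a b c d : R) : Prop :=
  / (INR n + 1) <= a /\ / (INR n + 1) <= q a b c d /\
  Rabs a <= INR n + 1 /\ Rabs b <= INR n + 1 /\ Rabs c <= INR n + 1 /\ Rabs d <= INR n + 1.

Lemma inv_INR_succ_pos (n : nat) : 0 < / (INR n + 1).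
Proof. apply Rinv_0_lt_compat. generalize (pos_INR n). lra. Qed.

Lemma exhaustion_covers (q : R -> R -> R -> R -> R) (a b c d : R) :
  0 < a -> 0 < q a b c d -> exists n, exhaustion q n a b c d.
Proof.
  intros Ha Hq.
  destruct (INR_unbounded (/ a + / q a b c d + Rabs a + Rabs b + Rabs c + Rabs d)) as [n Hn].
  assert (Hinv : forall x, 0 < x -> / x <= INR n -> / (INR n + 1) <= x).
  { intros x Hx Hxn. rewrite <- (Rinv_inv x). apply Rinv_le_contravar.
    - now apply Rinv_0_lt_compat.
    - lra. }
  pose proof (Rinv_0_lt_compat _ Ha). pose proof (Rinv_0_lt_compat _ Hq).
  generalize (Rabs_pos a) (Rabs_pos b) (Rabs_pos c) (Rabs_pos d). intros.
  exists n. unfold exhaustion. repeat split; try lra; apply Hinv; lra.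
Qed.

Lemma null5_graph_on_exhaustion (q g : R -> R -> R -> R -> R) :
  (forall n, bounded_lipschitz_on (exhaustion q n) g) ->
  null5 (fun a b c d e => 0 < a /\ 0 < q a b c d /\ e = g a b c d).
Proof.
  intros Hg.
  apply null5_mono with (fun a b c d e => exists n, exhaustion q n a b c d /\ e = g a b c d).
  { intros a b c d e (Ha & Hq & He). destruct (exhaustion_covers q a b c d Ha Hq) as [n Hn].
    now exists n. }
  apply null5_countable_union. intros n.
  destruct (Hg n) as (M & L & HL & _ & Hl).
  apply (null5_lipschitz_graph _ _ (INR n + 1) L);
    [generalize (pos_INR n); lra | exact HL | | exact Hl].
  intros a b c d Hx. apply Hx.
Qed.

Section Exhaustion.
Variables (q : R -> R -> R -> R -> R) (n : nat).

Let K := exhaustion q n.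

Lemma exhaustion_coord0 : bounded_lipschitz_on K (fun a _ _ _ => a).
Proof.
  apply (bounded_lipschitz_1 _ _ (INR n + 1)); [intros a b c d H; apply H |].
  intros. unfold dist4. generalize (Rabs_pos (b - b')) (Rabs_pos (c - c')) (Rabs_pos (d - d')). lra.
Qed.

Lemma exhaustion_coord1 : bounded_lipschitz_on K (fun _ b _ _ => b).
Proof.
  apply (bounded_lipschitz_1 _ _ (INR n + 1)); [intros a b c d H; apply H |].
  intros. unfold dist4. generalize (Rabs_pos (a - a')) (Rabs_pos (c - c')) (Rabs_pos (d - d')). lra.
Qed.

Lemma exhaustion_coord2 : bounded_lipschitz_on K (fun _ _ c _ => c).
Proof.
  apply (bounded_lipschitz_1 _ _ (INR n + 1)); [intros a b c d H; apply H |].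
  intros. unfold dist4. generalize (Rabs_pos (a - a')) (Rabs_pos (b - b')) (Rabs_pos (d - d')). lra.
Qed.

Lemma exhaustion_coord3 : bounded_lipschitz_on K (fun _ _ _ d => d).
Proof.
  apply (bounded_lipschitz_1 _ _ (INR n + 1)); [intros a b c d H; apply H |].
  intros. unfold dist4. generalize (Rabs_pos (a - a')) (Rabs_pos (b - b')) (Rabs_pos (c - c')). lra.
Qed.

Lemma exhaustion_inv_coord0 : bounded_lipschitz_on K (fun a _ _ _ => / a).
Proof.
  apply (bounded_lipschitz_inv _ _ (/ (INR n + 1)));
    [apply inv_INR_succ_pos | | apply exhaustion_coord0].
  intros a b c d H. destruct H as [Ha _]. pose proof (inv_INR_succ_pos n).
  rewrite Rabs_pos_eq; lra.
Qed.

Lemma exhaustion_inv_coord0_pow (p : nat) : bounded_lipschitz_on K (fun a _ _ _ => / a ^ p).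
Proof.
  apply (bounded_lipschitz_inv _ _ ((/ (INR n + 1)) ^ p)); [apply pow_lt, inv_INR_succ_pos | |].
  - intros a b c d H. destruct H as [Ha _]. pose proof (inv_INR_succ_pos n).
    rewrite <- RPow_abs, Rabs_pos_eq by lra. apply pow_incr. lra.
  - apply bounded_lipschitz_pow, exhaustion_coord0.
Qed.

Lemma exhaustion_inv_sqrt_rho : bounded_lipschitz_on K (fun a _ c _ => / sqrt (rho a c)).
Proof.
  pose proof (inv_INR_succ_pos n) as Hm.
  assert (Hrho : forall a b c d, K a b c d -> (/ (INR n + 1)) ^ 4 <= rho a c).
  { intros a b c d [Ha _]. unfold rho. generalize (pow2_ge_0 c). intros.
    assert ((/ (INR n + 1)) ^ 4 <= a ^ 4) by (apply pow_incr; lra). lra. }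
  apply (bounded_lipschitz_inv _ _ ((/ (INR n + 1)) ^ 2)); [now apply pow_lt | |].
  - intros a b c d H. rewrite Rabs_pos_eq by apply sqrt_pos.
    rewrite <- (sqrt_pow2 ((/ (INR n + 1)) ^ 2)) by (apply pow_le; lra).
    apply sqrt_le_1_alt. rewrite <- pow_mult. now apply (Hrho a b c d).
  - apply (bounded_lipschitz_sqrt _ _ ((/ (INR n + 1)) ^ 4)); [now apply pow_lt | exact Hrho |].
    unfold rho. apply bounded_lipschitz_plus.
    + apply bounded_lipschitz_pow, exhaustion_coord0.
    + apply bounded_lipschitz_mult; [apply bounded_lipschitz_const |].
      apply bounded_lipschitz_pow, exhaustion_coord2.
Qed.

End Exhaustion.

(** * The exceptional sets *)

Ltac bounded_lipschitz_by_structure :=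
  repeat first
    [ assumption
    | apply bounded_lipschitz_const | apply exhaustion_coord0 | apply exhaustion_coord1
    | apply exhaustion_coord2 | apply exhaustion_coord3 | apply exhaustion_inv_coord0
    | apply exhaustion_inv_coord0_pow | apply exhaustion_inv_sqrt_rho
    | apply bounded_lipschitz_plus | apply bounded_lipschitz_minus | apply bounded_lipschitz_opp
    | apply bounded_lipschitz_mult | apply bounded_lipschitz_pow
    | apply bounded_lipschitz_atan ].

Lemma null5_coord4_zero : null5 (fun a b c d e => 0 < a /\ e = 0).
Proof.
  apply null5_mono with (fun a b c d e =>
    0 < a /\ 0 < (fun _ _ _ _ => 1) a b c d /\ e = (fun _ _ _ _ => 0) a b c d).
  - intros a b c d e [Ha He]. repeat split; auto. lra.
  - apply null5_graph_on_exhaustion. intros n. apply bounded_lipschitz_const.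
Qed.

Lemma null5_pR_zero : null5 (fun r th z pR pS => 0 < r /\ pR = 0).
Proof. apply null5_swap_3_4, null5_coord4_zero. Qed.

Lemma null5_z_zero : null5 (fun r th z pR pS => 0 < r /\ z = 0).
Proof. apply null5_swap_2_4, null5_coord4_zero. Qed.

(* Where [A = 0] and [pR <> 0], [z] is a function of the other coordinates, since
   [A = pR pS r + 2 z (pS^2 / r^2 - pR^2)]. *)
Lemma null5_A_zero : null5 (fun r th z pR pS => 0 < r /\ A_coef r z pR pS = 0 /\ pR <> 0).
Proof.
  apply null5_swap_2_4.
  apply null5_mono with (fun r th pS pR z =>
    0 < r /\ 0 < (fun r _ pS pR => Rabs (pS ^ 2 / r ^ 2 - pR ^ 2)) r th pS pR /\
    z = (fun r _ pS pR => - (pR * pS * r) / (2 * (pS ^ 2 / r ^ 2 - pR ^ 2))) r th pS pR).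
  - intros r th pS pR z (Hr & HA & HpR). unfold A_coef in HA.
    set (c := pS ^ 2 / r ^ 2 - pR ^ 2).
    assert (EA : pR * pS * r - 2 * pR ^ 2 * z + 2 * pS ^ 2 * z / r ^ 2 = pR * pS * r + 2 * z * c)
      by (unfold c; field; lra).
    rewrite EA in HA.
    assert (Hc : c <> 0).
    { intros Hc. rewrite Hc in HA.
      assert (HpS : pS = 0).
      { assert (E : pR * pS * r = 0) by lra.
        apply Rmult_integral in E as [E | E]; [| lra].
        apply Rmult_integral in E as [E | E]; [contradiction | exact E]. }
      apply HpR. unfold c in Hc. rewrite HpS in Hc. unfold Rdiv in Hc. nra. }
    split; [exact Hr | split; [now apply Rabs_pos_lt |]].
    cbv beta. fold c. field_simplify_eq; [lra | exact Hc].
  - apply null5_graph_on_exhaustion. intros n.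
    bounded_lipschitz_by_structure.
    apply (bounded_lipschitz_inv _ _ (/ (INR n + 1))); [apply inv_INR_succ_pos | |].
    + intros r th pS pR [_ [Hq _]]. pose proof (inv_INR_succ_pos n).
      rewrite Rabs_mult, (Rabs_pos_eq 2) by lra. lra.
    + bounded_lipschitz_by_structure.
Qed.

(* Where [H = 0], [pR^2 = 2 k / sqrt rho - pS^2 / r^2], so [pR] lies on one of two graphs. *)
Lemma null5_Ham_zero (k : R) :
  null5 (fun r th z pR pS => 0 < r /\ Ham k r th z pR pS = 0 /\ pR <> 0).
Proof.
  apply null5_swap_3_4.
  set (Q := fun r (_ : R) z pS => 2 * k / sqrt (rho r z) - pS ^ 2 / r ^ 2).
  apply null5_mono with (fun r th z pS pR =>
    (0 < r /\ 0 < Q r th z pS /\ pR = (fun r th z pS => sqrt (Q r th z pS)) r th z pS) \/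
    (0 < r /\ 0 < Q r th z pS /\ pR = (fun r th z pS => - sqrt (Q r th z pS)) r th z pS)).
  - intros r th z pS pR (Hr & HH & HpR). unfold Ham in HH.
    pose proof (sqrt_lt_R0 _ (rho_pos r z Hr)).
    assert (EQ : Q r th z pS = pR ^ 2).
    { unfold Q.
      replace (2 * k / sqrt (rho r z)) with (2 * (k / sqrt (rho r z))) by (unfold Rdiv; ring).
      replace (k / sqrt (rho r z)) with (/ 2 * (pR ^ 2 + pS ^ 2 / r ^ 2)) by lra. field. lra. }
    assert (HQ : 0 < Q r th z pS) by (rewrite EQ; now apply pow2_gt_0).
    cbv beta.
    destruct (Rlt_or_le 0 pR) as [Hp | Hp]; [left | right];
      (split; [exact Hr | split; [exact HQ |]]); rewrite EQ.
    + now rewrite sqrt_pow2 by lra.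
    + rewrite <- (pow2_abs pR), sqrt_pow2 by apply Rabs_pos. rewrite Rabs_left1 by lra. ring.
  - assert (HQ : forall n,
      bounded_lipschitz_on (exhaustion Q n) (fun r th z pS => sqrt (Q r th z pS))).
    { intros n. apply (bounded_lipschitz_sqrt _ _ (/ (INR n + 1))); [apply inv_INR_succ_pos | |].
      - intros r th z pS H. apply H.
      - unfold Q. bounded_lipschitz_by_structure. }
    apply null5_union; apply null5_graph_on_exhaustion; [exact HQ |].
    intros n. apply bounded_lipschitz_opp, HQ.
Qed.

Lemma sin_cos_comb_zero (A B x : R) :
  A <> 0 -> - A * sin x + B * cos x = 0 -> exists m : Z, x = atan (B / A) + IZR m * PI.
Proof.
  intros HA H.
  assert (Hc : cos x <> 0).
  { intros Hc. rewrite Hc, Rmult_0_r, Rplus_0_r in H.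
    assert (Hs : sin x = 0) by (apply Rmult_integral in H as [H' | H']; [lra | exact H']).
    generalize (sin2_cos2 x). rewrite Hs, Hc. unfold Rsqr. lra. }
  set (y := atan (B / A)).
  assert (Hy : 0 < cos y) by (apply cos_gt_0; generalize (atan_bound (B / A)); fold y; lra).
  assert (Ty : sin y = B / A * cos y).
  { rewrite <- (tan_atan (B / A)). fold y. unfold tan. field. lra. }
  assert (Tx : sin x = B / A * cos x) by (field_simplify_eq; lra).
  assert (E : sin (x - y) = 0) by (rewrite sin_minus, Ty, Tx; ring).
  destruct (sin_eq_0_0 _ E) as [m Hm]. exists m. lra.
Qed.

Lemma IZR_nat_or_opp (m : Z) : exists j : nat, IZR m = INR j \/ IZR m = - INR j.
Proof.
  destruct (Z.le_gt_cases 0 m) as [Hm | Hm].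
  - exists (Z.to_nat m). left. now rewrite INR_IZR_INZ, Z2Nat.id.
  - exists (Z.to_nat (- m)). right. rewrite INR_IZR_INZ, Z2Nat.id by lia. rewrite opp_IZR. ring.
Qed.

Lemma null5_theta_graphs (k ph : R) (P : set5) :
  (forall r th z pR pS, 0 < r -> A_coef r z pR pS <> 0 -> P r th z pR pS ->
     exists m : Z, th = ph + atan (B_coef k r z pR pS / A_coef r z pR pS) / 2 + IZR m * (PI / 2)) ->
  null5 (fun r th z pR pS => 0 < r /\ A_coef r z pR pS <> 0 /\ P r th z pR pS).
Proof.
  intros HP. apply null5_swap_1_4.
  set (q := fun r (pS z pR : R) => Rabs (A_coef r z pR pS)).
  set (G := fun r pS z pR => ph + atan (B_coef k r z pR pS / A_coef r z pR pS) / 2).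
  apply null5_mono with (fun r pS z pR th =>
    (exists j : nat, 0 < r /\ 0 < q r pS z pR /\
       th = (fun r pS z pR => G r pS z pR + INR j * (PI / 2)) r pS z pR) \/
    (exists j : nat, 0 < r /\ 0 < q r pS z pR /\
       th = (fun r pS z pR => G r pS z pR - INR j * (PI / 2)) r pS z pR)).
  - intros r pS z pR th (Hr & HA & Hth).
    assert (Hq : 0 < q r pS z pR) by now apply Rabs_pos_lt.
    destruct (HP r th z pR pS Hr HA Hth) as [m Hm].
    destruct (IZR_nat_or_opp m) as [j [Hj | Hj]]; rewrite Hj in Hm; [left | right];
      exists j; (split; [exact Hr | split; [exact Hq |]]); cbv beta; unfold G; rewrite Hm; ring.
  - assert (HG : forall n, bounded_lipschitz_on (exhaustion q n) G).
    { intros n.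
      assert (HinvA : bounded_lipschitz_on (exhaustion q n) (fun r pS z pR => / A_coef r z pR pS)).
      { apply (bounded_lipschitz_inv _ _ (/ (INR n + 1))); [apply inv_INR_succ_pos | |].
        - intros r pS z pR H. apply H.
        - unfold A_coef. bounded_lipschitz_by_structure. }
      unfold G, B_coef. bounded_lipschitz_by_structure. }
    apply null5_union; apply null5_countable_union; intros j; apply null5_graph_on_exhaustion;
      intros n; [apply bounded_lipschitz_plus | apply bounded_lipschitz_minus];
      auto using bounded_lipschitz_const.
Qed.

Lemma null5_F1_zero (k : R) :
  null5 (fun r th z pR pS => 0 < r /\ A_coef r z pR pS <> 0 /\ F1 k r th z pR pS = 0).
Proof.
  apply (null5_theta_graphs k (PI / 4)). intros r th z pR pS Hr HA HF. unfold F1 in HF.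
  destruct (sin_cos_comb_zero (A_coef r z pR pS) (B_coef k r z pR pS) (2 * th - PI / 2)) as [m Hm].
  - exact HA.
  - rewrite sin_minus, cos_minus, sin_PI2, cos_PI2. lra.
  - exists m. lra.
Qed.

Lemma null5_F2_zero (k : R) :
  null5 (fun r th z pR pS => 0 < r /\ A_coef r z pR pS <> 0 /\ F2 k r th z pR pS = 0).
Proof.
  apply (null5_theta_graphs k 0). intros r th z pR pS Hr HA HF. unfold F2 in HF.
  destruct (sin_cos_comb_zero _ _ _ HA HF) as [m Hm]. exists m. lra.
Qed.

(** * Functional independence *)

Lemma indep_ae_of_grad_minor (f g h : phasefun) (P : set5) :
  null5 P ->
  (forall r th z pR pS, 0 < r -> pR <> 0 -> A_coef r z pR pS <> 0 -> ~ P r th z pR pS ->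
     grad_minor f g h r th z pR pS <> 0) ->
  indep_ae f g h.
Proof.
  intros HP Hminor.
  apply null5_mono with (fun r th z pR pS =>
    (0 < r /\ A_coef r z pR pS = 0 /\ pR <> 0) \/ ((0 < r /\ pR = 0) \/ P r th z pR pS)).
  - intros r th z pR pS [Hr Hn].
    destruct (Req_dec pR 0) as [HpR | HpR]; [now right; left |].
    destruct (Req_dec (A_coef r z pR pS) 0) as [HA | HA]; [now left |].
    destruct (classic (P r th z pR pS)) as [HPx | HPx]; [now right; right |].
    exfalso. now apply Hn, indep_at_of_grad_minor, Hminor.
  - apply null5_union; [apply null5_A_zero |].
    apply null5_union; [apply null5_pR_zero | exact HP].
Qed.

Lemma indep_ae_Ham_F1_F3 (k : R) : indep_ae (Ham k) (F1 k) (F3 k).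
Proof.
  apply (indep_ae_of_grad_minor _ _ _ _ (null5_F2_zero k)).
  intros r th z pR pS Hr _ HA HF.
  assert (HF2 : F2 k r th z pR pS <> 0) by (intros E; now apply HF).
  rewrite grad_minor_Ham_F1_F3 by exact Hr.
  repeat apply Rmult_integral_contrapositive_currified; lra.
Qed.

Lemma indep_ae_Ham_F2_F3 (k : R) : indep_ae (Ham k) (F2 k) (F3 k).
Proof.
  apply (indep_ae_of_grad_minor _ _ _ _ (null5_F1_zero k)).
  intros r th z pR pS Hr _ HA HF.
  assert (HF1 : F1 k r th z pR pS <> 0) by (intros E; now apply HF).
  rewrite grad_minor_Ham_F2_F3 by exact Hr.
  repeat apply Rmult_integral_contrapositive_currified; lra.
Qed.

Lemma indep_ae_Ham_F1_F2 (k : R) : indep_ae (Ham k) (F1 k) (F2 k).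
Proof.
  apply (indep_ae_of_grad_minor _ _ _ _ (null5_Ham_zero k)).
  intros r th z pR pS Hr HpR HA HH.
  assert (HH0 : Ham k r th z pR pS <> 0) by (intros E; now apply HH).
  rewrite grad_minor_Ham_F1_F2 by exact Hr.
  repeat apply Rmult_integral_contrapositive_currified; lra.
Qed.

Lemma F3_pos (k r th z pR pS : R) : 0 < k -> 0 < r -> z <> 0 -> 0 < F3 k r th z pR pS.
Proof.
  intros Hk Hr Hz. unfold F3.
  assert (0 < 4 * z ^ 2) by (generalize (pow2_gt_0 z Hz); lra).
  assert (0 <= pS ^ 2 / r ^ 2) by (apply Rdiv_le_0_compat; [apply pow2_ge_0 | now apply pow_lt]).
  assert (0 < 2 * k / sqrt (rho r z))
    by (apply Rdiv_lt_0_compat; [lra | now apply sqrt_lt_R0, rho_pos]).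
  generalize (pow2_ge_0 (2 * z * pR - r * pS)). nra.
Qed.

Lemma indep_ae_F1_F2_F3 (k : R) : 0 < k -> indep_ae (F1 k) (F2 k) (F3 k).
Proof.
  intros Hk. apply (indep_ae_of_grad_minor _ _ _ _ null5_z_zero).
  intros r th z pR pS Hr _ HA Hz. rewrite grad_minor_F1_F2_F3 by exact Hr.
  assert (Hz0 : z <> 0) by (intros Hz0; now apply Hz).
  pose proof (F3_pos k r th z pR pS Hk Hr Hz0).
  repeat apply Rmult_integral_contrapositive_currified; lra.
Qed.

Theorem theorem2 (k : R) (hk : 0 < k) :
  first_integral k (F1 k) /\ first_integral k (F2 k) /\ first_integral k (F3 k) /\
  indep_ae (Ham k) (F1 k) (F2 k) /\ indep_ae (Ham k) (F1 k) (F3 k) /\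
  indep_ae (Ham k) (F2 k) (F3 k) /\ indep_ae (F1 k) (F2 k) (F3 k) /\
  (forall r th z pR pS : R, 0 < r ->
     (F1 k r th z pR pS) ^ 2 + (F2 k r th z pR pS) ^ 2
     = 2 * Ham k r th z pR pS * F3 k r th z pR pS + k ^ 2).
Proof.
  repeat split.
  - apply F1_first_integral.
  - apply F2_first_integral.
  - apply F3_first_integral.
  - apply indep_ae_Ham_F1_F2.
  - apply indep_ae_Ham_F1_F3.
  - apply indep_ae_Ham_F2_F3.
  - now apply indep_ae_F1_F2_F3.
  - apply F1_F2_relation.
Qed.
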